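(* Let $T\in V$ be a target variable. If $\zeta_T=0$ (i.e. $T\notin\Upsilon_i$ for all $i$) and $\Upsilon$ is conservative, then $\bigcup_{i=1}^{n}MB_i(T)=MB(T)$.
   Context: Let $G=(V,E)$ be a DAG (causal Bayesian network) over a finite set $V$ of random variables with joint distribution $P$ satisfying the Markov condition with respect to $G$; causal sufficiency is assumed. For $X\in V$, $pa(X)$ and $ch(X)$ are the parents and children of $X$ in $G$, $sp(X)=\big(\bigcup_{Y\in ch(X)}pa(Y)\big)\setminus\{X\}$ is the set of spouses, and $MB(X)=pa(X)\cup ch(X)\cup sp(X)$ is the Markov blanket. There are $n\ge 1$ intervention experiments; in the $i$-th, the set $\Upsilon_i\subseteq V$ (possibly empty) is manipulated, and $\Upsilon=\{\Upsilon_1,\dots,\Upsilon_n\}$. The post-intervention DAG is $G_i=(V,E_i)$ with $E_i=\{(a,b)\in E: b\notin\Upsilon_i\}$, with distribution $P_i(V)=\prod_{V_j\notin\Upsilon_i}P(V_j\mid pa(V_j))\prod_{V_j\in\Upsilon_i}P_i(V_j)$, and $D_i$ is a dataset drawn from $P_i$. It is assumed that each $P_i$ is faithful to $G_i$ and that conditional independence tests on $D_i$ are reliable (return exactly the conditional independences of $P_i$). $MB_i(T)$ denotes the Markov blanket of $T$ found in $D_i$, i.e. the set of parents, children and spouses of $T$ in $G_i$. $\zeta_T=|\{i:T\in\Upsilon_i\}|$ is the number of experiments in which $T$ is manipulated. $\Upsilon$ is called conservative if for every $V_j\in\bigcup_{i=1}^n\Upsilon_i$ there exists $i$ with $V_j\notin\Upsilon_i$.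 *)

(* A DAG over a finite variable set V is an edge relation
   E : rel V (E a b = edge a -> b) with no directed cycle. *)
From mathcomp Require Import all_boot.
Set Implicit Arguments. Unset Strict Implicit. Unset Printing Implicit Defensive.

Definition acyclic (V : finType) (E : rel V) : Prop :=
  forall x y : V, E x y -> ~~ connect E y x.

Definition pa (V : finType) (E : rel V) (X : V) : {set V} := [set a | E a X].
Definition ch (V : finType) (E : rel V) (X : V) : {set V} := [set b | E X b].
Definition sp (V : finType) (E : rel V) (X : V) : {set V} :=
  (\bigcup_(Y in ch E X) pa E Y) :\ X.
Definition MB (V : finType) (E : rel V) (X : V) : {set V} :=
  pa E X :|: ch E X :|: sp E X.

(* post-intervention graph: remove all edges into manipulated variables *)
Definition intervened (V : finType) (E : rel V) (U : {set V}) : rel V :=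
  fun a b => E a b && (b \notin U).

(* MB_i(T): Markov blanket of T in G_i (as identified from D_i under
   faithfulness and reliable CI tests) *)
Definition MB_i (V : finType) (E : rel V) (n : nat) (Ups : 'I_n -> {set V})
  (i : 'I_n) (T : V) : {set V} := MB (intervened E (Ups i)) T.

Definition zeta (V : finType) (n : nat) (Ups : 'I_n -> {set V}) (T : V) : nat :=
  #|[set i : 'I_n | T \in Ups i]|.

Definition conservative (V : finType) (n : nat) (Ups : 'I_n -> {set V}) : Prop :=
  forall v : V, v \in \bigcup_(i < n) Ups i -> exists i : 'I_n, v \notin Ups i.

(* Intervening on U only deletes the edges pointing into U, so the Markov
   blanket of T can only shrink; when T is not manipulated, what is lost are
   the children in U and the spouses met only through them.  If T is never
   manipulated and every variable is kept by some experiment, each parent,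
   each child Y and each spouse through Y survives in an experiment that
   keeps Y. *)
From mathcomp Require Import all_boot.

Set Implicit Arguments.
Unset Strict Implicit.
Unset Printing Implicit Defensive.

Section Blanket.

Variable V : finType.

Lemma MB_subrel (E' E : rel V) X : subrel E' E -> MB E' X \subset MB E X.
Proof.
move=> sE; apply/subsetP => x; rewrite !inE.
case/orP=> [/orP[/sE -> // | /sE ->] | /andP[-> /bigcupP[Y]]]; rewrite ?orbT //=.
rewrite !inE => /sE XY /sE xY.
by apply/orP; right; apply/bigcupP; exists Y; rewrite ?inE.
Qed.

Variables (E : rel V) (U : {set V}).

Lemma intervened_subrel : subrel (intervened E U) E.
Proof. by move=> a b /andP[]. Qed.

Lemma pa_intervened X : X \notin U -> pa (intervened E U) X = pa E X.
Proof. by move=> XU; apply/setP => a; rewrite !inE /intervened XU andbT. Qed.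

Lemma ch_intervened X : ch (intervened E U) X = ch E X :\: U.
Proof. by apply/setP => b; rewrite !inE /intervened andbC. Qed.

Lemma sp_intervened X :
  sp (intervened E U) X = (\bigcup_(Y in ch E X :\: U) pa E Y) :\ X.
Proof.
rewrite /sp ch_intervened; congr (_ :\ _); apply: eq_bigr => Y.
by rewrite inE => /andP[YU _]; apply: pa_intervened.
Qed.

Lemma MB_intervened X : X \notin U ->
  MB (intervened E U) X =
  pa E X :|: ch E X :\: U :|: (\bigcup_(Y in ch E X :\: U) pa E Y) :\ X.
Proof.
by move=> XU; rewrite /MB pa_intervened // ch_intervened sp_intervened.
Qed.

End Blanket.

Lemma bigcup_MB_intervened (V : finType) (E : rel V) (I : finType)
    (U : I -> {set V}) X :
  (forall i, X \notin U i) -> (forall v, exists i, v \notin U i) ->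
  \bigcup_i MB (intervened E (U i)) X = MB E X.
Proof.
move=> X_kept avoid; apply/eqP; rewrite eqEsubset; apply/andP; split.
  by apply/bigcupsP => i _; apply/MB_subrel/intervened_subrel.
apply/subsetP => x; rewrite {1}/MB /sp !inE.
case/orP=> [/orP[x_pa | x_ch] | /andP[xX /bigcupP[Y Y_ch x_paY]]].
- have [i _] := avoid X.
  by apply/bigcupP; exists i; rewrite // MB_intervened // !inE x_pa.
- have [i xU] := avoid x.
  by apply/bigcupP; exists i; rewrite // MB_intervened // !inE x_ch xU orbT.
- have [i YU] := avoid Y.
  apply/bigcupP; exists i; rewrite // MB_intervened // !inE xX /=.
  by apply/orP; right; apply/bigcupP; exists Y; rewrite // inE YU.
Qed.

Lemma zeta_eq0P (V : finType) n (Ups : 'I_n -> {set V}) T :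
  reflect (forall i, T \notin Ups i) (zeta Ups T == 0).
Proof.
rewrite /zeta cards_eq0; apply: (iffP eqP) => [/setP T_never i | T_never].
  by move: (T_never i); rewrite !inE => ->.
by apply/setP => i; rewrite !inE (negbTE (T_never i)).
Qed.

Lemma conservative_avoid (V : finType) n (Ups : 'I_n -> {set V}) :
  0 < n -> conservative Ups -> forall v, exists i, v \notin Ups i.
Proof.
move=> n_gt0 cons v; have [/cons // | v_never] := boolP (v \in \bigcup_i Ups i).
exists (Ordinal n_gt0); apply: contra v_never => v_in.
by apply/bigcupP; exists (Ordinal n_gt0).
Qed.

Theorem theorem2 (V : finType) (E : rel V) (n : nat) (Ups : 'I_n -> {set V})
  (T : V) :
  acyclic E -> 0 < n -> zeta Ups T = 0 -> conservative Ups ->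
  \bigcup_(i < n) MB_i E Ups i T = MB E T.
Proof.
move=> _ n_gt0 /eqP/zeta_eq0P T_never /(conservative_avoid n_gt0) avoid.
exact: bigcup_MB_intervened.
Qed.
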